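(* Let $T$ be a decomposition tree of a distance-hereditary graph $G$, and let $v$ be an internal node of $T$ labeled $\otimes$ with left child $v_l$ and right child $v_r$, such that property (P) holds at $v_l$ and at $v_r$. Then $\hat\gamma_0(v)=\min\{\hat\gamma_i(v_l)+\hat\gamma_i(v_r) : 0\le i\le \min\{|\hat{TS}(v_l)|,|\hat{TS}(v_r)|\}\}$.
   Context: All graphs are finite, simple, undirected. For a graph $H$ and $S\subseteq V(H)$, $N_H[S]$ is $S$ together with all vertices adjacent to a vertex of $S$, and $H[S]$ is the induced subgraph. Graphs carry a ''twin set'': a single-vertex graph on $x$ has twin set $\{x\}$. For vertex-disjoint graphs $G_l,G_r$ with twin sets $TS(G_l),TS(G_r)$: the true twin operation $G_l\otimes G_r$ has vertex set $V(G_l)\cup V(G_r)$, edge set $E(G_l)\cup E(G_r)\cup\{uw: u\in TS(G_l), w\in TS(G_r)\}$ and twin set $TS(G_l)\cup TS(G_r)$; the false twin operation $G_l\odot G_r$ has vertex set $V(G_l)\cup V(G_r)$, edge set $E(G_l)\cup E(G_r)$, twin set $TS(G_l)\cup TS(G_r)$; the attachment operation $G_l\oplus G_r$ has the same vertex and edge sets as $G_l\otimes G_r$ and twin set $TS(G_l)$. A decomposition tree $T$ of $G$ is a rooted binary tree whose leaves are in bijection with $V(G)$, each internal node having a left and a right child and a label in $\{\otimes,\odot,\oplus\}$; for each node $v$ define $\hat G(v)$ and $\hat{TS}(v)$ recursively: for a leaf $x$, the single-vertex graph on $x$ with twin set $\{x\}$; for an internal node $v$ with label $\circ$ and children $v_l,v_r$,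 $\hat G(v)=\hat G(v_l)\circ\hat G(v_r)$ with the corresponding twin set; one requires $\hat G(\text{root})=G$. Then $\hat G(v)$ is the subgraph of $G$ induced by the set $\hat V(v)$ of leaves below $v$. For a node $u$ and $0\le k\le|\hat{TS}(u)|$, call $S\subseteq\hat V(u)$ $k$-feasible if $\hat V(u)\setminus\hat{TS}(u)\subseteq N_{\hat G(u)}[S]$ and there is $X\subseteq S\cap\hat{TS}(u)$ with $|X|=k$ such that $\hat G(u)[S\setminus X]$ has a perfect matching. $\hat\gamma_k(u)$ is the minimum size of a $k$-feasible set. $\hat{min}(u)=\min\{\hat\gamma_k(u):0\le k\le|\hat{TS}(u)|\}$, and $\hat\alpha(u)$, $\hat\beta(u)$ are the smallest and the largest $k$ with $\hat\gamma_k(u)=\hat{min}(u)$. Property (P) holds at $u$ if for every $0\le k\le|\hat{TS}(u)|$: $\hat\gamma_k(u)=\hat{min}(u)+\hat\alpha(u)-k$ when $k\le\hat\alpha(u)$; $\hat\gamma_k(u)=\hat{min}(u)+k-\hat\beta(u)$ when $k\ge\hat\beta(u)$; $\hat\gamma_k(u)=\hat{min}(u)$ when $\hat\alpha(u)<k<\hat\beta(u)$ and $k-\hat\alpha(u)$ is even; and $\hat\gamma_k(u)=\hat{min}(u)+1$ otherwise. *)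

From mathcomp Require Import all_boot.
Set Implicit Arguments. Unset Strict Implicit. Unset Printing Implicit Defensive.

(* p is a walk from x to y (of length size p) in the induced subgraph G[S] *)
Definition walk_in (V : finType) (G : rel V) (S : {set V}) (x y : V) (p : seq V) : bool :=
  (x \in S) && path (fun a b => G a b && (b \in S)) x p && (last x p == y).

Definition is_dist (V : finType) (G : rel V) (S : {set V}) (x y : V) (d : nat) : Prop :=
  (exists p, walk_in G S x y p /\ size p = d) /\
  (forall p, walk_in G S x y p -> d <= size p).

Definition distance_hereditary (V : finType) (G : rel V) : Prop :=
  forall (S : {set V}) (x y : V), x \in S -> y \in S ->
    (exists p, walk_in G S x y p) ->
    forall d, is_dist G S x y d -> is_dist G setT x y d.

Inductive op := OTrue (* ⊗ *) | OFalse (* ⊙ *) | OAttach (* ⊕ *).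

Definition op_eqb (a b : op) : bool :=
  match a, b with
  | OTrue, OTrue | OFalse, OFalse | OAttach, OAttach => true
  | _, _ => false
  end.

Inductive dtree (V : Type) :=
  | Leaf of V
  | Node of op & dtree V & dtree V.
Arguments Leaf {V}.
Arguments Node {V}.

Fixpoint leaves (V : Type) (t : dtree V) : seq V :=
  match t with
  | Leaf x => [:: x]
  | Node _ l r => leaves l ++ leaves r
  end.

Section Hat.
Variable V : finType.

Definition hV (t : dtree V) : {set V} := [set x | x \in leaves t].

Fixpoint hTS (t : dtree V) : {set V} :=
  match t with
  | Leaf x => [set x]
  | Node OAttach l _ => hTS l
  | Node _ l r => hTS l :|: hTS r
  end.

Fixpoint hE (t : dtree V) : rel V :=
  match t with
  | Leaf _ => fun _ _ => false
  | Node o l r => fun x y =>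
      [|| hE l x y, hE r x y |
       ~~ op_eqb o OFalse &&
       (((x \in hTS l) && (y \in hTS r)) || ((y \in hTS l) && (x \in hTS r)))]
  end.

End Hat.

Fixpoint is_subtree (V : Type) (s t : dtree V) : Prop :=
  s = t \/ match t with
           | Leaf _ => False
           | Node _ l r => is_subtree s l \/ is_subtree s r
           end.

Definition decomp_tree (V : finType) (G : rel V) (T : dtree V) : Prop :=
  uniq (leaves T) /\ (forall x, x \in leaves T) /\ (forall x y, G x y = hE T x y).

Definition has_pm (V : finType) (E : rel V) (W : {set V}) : bool :=
  [exists M : {set {set V}},
     [forall e in M, [exists x, [exists y,
        [&& x \in W, y \in W, x != y, E x y & e == [set x; y]]]]]
     && [forall w in W, #|[set e in M | w \in e]| == 1]].

Definition closedN (V : finType) (u : dtree V) (S : {set V}) : {set V} :=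
  [set x in hV u | (x \in S) || [exists y in S, hE u x y]].

Definition feasible (V : finType) (u : dtree V) (k : nat) (S : {set V}) : bool :=
  [&& S \subset hV u,
      (hV u :\: hTS u) \subset closedN u S &
      [exists X : {set V},
         [&& X \subset S :&: hTS u, #|X| == k & has_pm (hE u) (S :\: X)]]].

(* \hat\gamma_k(u), with None = +infinity (no k-feasible set) *)
Definition gamma (V : finType) (u : dtree V) (k : nat) : option nat :=
  if [exists S, feasible u k S]
  then Some (\big[minn/#|V|]_(S | feasible u k S) #|S|)
  else None.

Definition omin (a b : option nat) : option nat :=
  match a, b with
  | Some m, Some n => Some (minn m n)
  | Some m, None => Some m
  | None, b => b
  end.

Definition oadd (a b : option nat) : option nat :=
  match a, b with
  | Some m, Some n => Some (m + n)
  | _, _ => None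
  end.

Definition oaddn (a : option nat) (n : nat) : option nat := omap (fun m => m + n) a.

Definition hmin (V : finType) (u : dtree V) : option nat :=
  foldr omin None [seq gamma u k | k <- iota 0 #|hTS u|.+1].

Definition argmins (V : finType) (u : dtree V) : seq nat :=
  [seq k <- iota 0 #|hTS u|.+1 | gamma u k == hmin u].

Definition halpha (V : finType) (u : dtree V) : nat := head 0 (argmins u).
Definition hbeta (V : finType) (u : dtree V) : nat := last 0 (argmins u).

Definition propP (V : finType) (u : dtree V) : Prop :=
  forall k, k <= #|hTS u| ->
    (k <= halpha u -> gamma u k = oaddn (hmin u) (halpha u - k)) /\
    (hbeta u <= k -> gamma u k = oaddn (hmin u) (k - hbeta u)) /\
    (halpha u < k < hbeta u -> ~~ odd (k - halpha u) -> gamma u k = hmin u) /\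
    (halpha u < k < hbeta u -> odd (k - halpha u) -> gamma u k = oaddn (hmin u) 1).

From mathcomp Require Import all_boot.
Set Implicit Arguments. Unset Strict Implicit. Unset Printing Implicit Defensive.

(* At a true-twin node v = vl (x) vr the graph is the disjoint union of the two
   sides plus all edges between TS(vl) and TS(vr).  If S_l is i-feasible at vl
   with unmatched twin vertices X_l, and S_r is i-feasible at vr with X_r, then
   S_l u S_r is 0-feasible at v: domination is inherited from the sides and the
   perfect matchings of the sides extend by matching X_l to X_r across the join.
   Conversely, a perfect matching of a 0-feasible S splits into its edges inside
   each side and cross edges; the endpoints X_l, X_r of the cross edges lie in
   the twin sets and are equinumerous, so S restricted to each side is
   i-feasible with i = |X_l|. *)

Section BigMin.
Variables (I : finType) (P : pred I) (F : I -> nat) (n : nat).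

Lemma bigmin_leq j : P j -> \big[minn/n]_(i | P i) F i <= F j.
Proof.
move=> Pj; have : j \in index_enum I by rewrite mem_index_enum.
elim: (index_enum I) => //= i r IHr; rewrite in_cons big_cons.
case/predU1P => [<-|/IHr le_j]; first by rewrite Pj geq_minl.
by case: (P i); rewrite // geq_min le_j orbT.
Qed.

Lemma bigmin_attained j : P j -> F j <= n ->
  exists2 i, P i & \big[minn/n]_(i | P i) F i = F i.
Proof.
move=> Pj le_n; case: (arg_minnP F Pj) => i Pi min_i; exists i => //.
apply/anti_leq; rewrite bigmin_leq //=.
apply: (big_ind (fun m => F i <= m)) => [|x y le_x le_y|k /min_i] //.
  exact: leq_trans (min_i j Pj) le_n.
by rewrite leq_min le_x.
Qed.

End BigMin.

Definition oleq (a b : option nat) : bool :=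
  if b is Some n then (if a is Some m then m <= n else false) else true.

Lemma oleq_anti a b : oleq a b -> oleq b a -> a = b.
Proof. by case: a b => [m|] [n|] //= mn nm; rewrite (@anti_leq m n) ?mn. Qed.

Lemma oleq_trans a b c : oleq a b -> oleq b c -> oleq a c.
Proof. by case: a b c => [?|] [?|] [?|] //=; apply: leq_trans. Qed.

Lemma oleq_oadd a1 a2 b1 b2 : oleq a1 b1 -> oleq a2 b2 -> oleq (oadd a1 a2) (oadd b1 b2).
Proof. by case: a1 a2 b1 b2 => [?|] [?|] [?|] [?|] //=; apply: leq_add. Qed.

Lemma omin_leql a b : oleq (omin a b) a.
Proof. by case: a b => [?|] [?|] //=; rewrite geq_minl. Qed.

Lemma omin_leqr a b : oleq (omin a b) b.
Proof. by case: a b => [?|] [?|] //=; rewrite geq_minr. Qed.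

Lemma omin_some a b m : omin a b = Some m -> a = Some m \/ b = Some m.
Proof.
by case: a b => [x|] [y|] //= [<-]; [rewrite /minn; case: ifP; auto | left | right].
Qed.

Lemma foldr_omin_leq (l : seq (option nat)) a :
  a \in l -> oleq (foldr omin None l) a.
Proof.
elim: l => //= b l IHl; rewrite in_cons => /predU1P [->|/IHl le_a].
  exact: omin_leql.
exact: oleq_trans (omin_leqr _ _) le_a.
Qed.

Lemma foldr_omin_mem (l : seq (option nat)) m :
  foldr omin None l = Some m -> Some m \in l.
Proof.
elim: l => //= b l IHl /omin_some [<-|/IHl]; first exact: mem_head.
by rewrite in_cons => ->; rewrite orbT.
Qed.

Section PerfectMatching.
Variables (V : finType) (E : rel V).
Implicit Types (A W TA TB XA XB : {set V}) (M : {set {set V}}).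

Definition is_pm W M : bool :=
  [forall e in M, [exists x, [exists y,
     [&& x \in W, y \in W, x != y, E x y & e == [set x; y]]]]]
  && [forall w in W, #|[set e in M | w \in e]| == 1].

Lemma has_pmP W : reflect (exists M, is_pm W M) (has_pm E W).
Proof. exact: existsP. Qed.

Lemma is_pmP W M :
  reflect ((forall e, e \in M ->
              exists x y, [/\ x \in W, y \in W, x != y, E x y & e = [set x; y]])
           /\ (forall w, w \in W -> #|[set e in M | w \in e]| = 1))
          (is_pm W M).
Proof.
apply: (iffP andP) => [[/forallP edges /forallP cover] | [edges cover]]; split.
- move=> e eM; have /existsP [x /existsP [y]] := implyP (edges e) eM.
  by case/and5P=> xW yW nxy Exy /eqP ->; exists x, y.
- by move=> w wW; apply/eqP/(implyP (cover w)).
- apply/forallP => e; apply/implyP => /edges [x [y [xW yW nxy Exy ->]]].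
  by apply/existsP; exists x; apply/existsP; exists y; rewrite xW yW nxy Exy eqxx.
- by apply/forallP => w; apply/implyP => /cover ->.
Qed.

Lemma pm_edge_sub W M e : is_pm W M -> e \in M -> e \subset W.
Proof.
by case/is_pmP=> edges _ /edges [x [y [xW yW _ _ ->]]]; rewrite subUset !sub1set xW.
Qed.

Lemma pm_edges_at W M w : is_pm W M -> w \in W ->
  exists e, [set e in M | w \in e] = [set e].
Proof. by case/is_pmP=> _ cover /cover /eqP /cards1P. Qed.

Lemma pm_edges_at_out W M w : is_pm W M -> w \notin W ->
  [set e in M | w \in e] = set0.
Proof.
move=> pm wW; apply/setP => e; rewrite !inE.
by apply/andP => -[/(pm_edge_sub pm) /subsetP /[apply]]; apply/negP.
Qed.

Lemma pm_cover W M w : is_pm W M -> w \in W -> exists2 e, e \in M & w \in e.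
Proof.
move=> pm /(pm_edges_at pm) [e at_w].
by have := set11 e; rewrite -at_w inE => /andP [eM we]; exists e.
Qed.

Lemma pm_edge_uniq W M w e1 e2 : is_pm W M -> w \in W ->
  e1 \in M -> e2 \in M -> w \in e1 -> w \in e2 -> e1 = e2.
Proof.
move=> pm /(pm_edges_at pm) [e at_w] e1M e2M we1 we2.
have : e1 \in [set e in M | w \in e] by rewrite inE e1M.
have : e2 \in [set e in M | w \in e] by rewrite inE e2M.
by rewrite at_w !inE => /eqP -> /eqP ->.
Qed.

Lemma pm_partner W M x : is_pm W M -> x \in W ->
  exists2 y, E x y || E y x & [set x; y] \in M.
Proof.
move=> pm /(pm_cover pm) [e eM xe].
case/is_pmP: pm => edges _; have [a [b [_ _ _ Eab e_ab]]] := edges e eM.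
move: xe; rewrite e_ab !inE => /orP [] /eqP ->; first by exists b; rewrite ?Eab -?e_ab.
by exists a; rewrite ?Eab ?orbT // setUC -e_ab.
Qed.

Lemma has_pm0 : has_pm E set0.
Proof. by apply/has_pmP; exists set0; apply/is_pmP; split=> ?; rewrite inE. Qed.

Lemma has_pm_pair x y : x != y -> E x y -> has_pm E [set x; y].
Proof.
move=> nxy Exy; apply/has_pmP; exists [set [set x; y]]; apply/is_pmP; split.
  by move=> e /set1P ->; exists x, y; rewrite !inE !eqxx orbT.
move=> w wxy; apply/eqP/cards1P; exists [set x; y]; apply/setP => e.
by rewrite !inE; case: eqP => [->|].
Qed.

Lemma has_pmU W1 W2 : [disjoint W1 & W2] ->
  has_pm E W1 -> has_pm E W2 -> has_pm E (W1 :|: W2).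
Proof.
move=> disW /has_pmP [M1 pm1] /has_pmP [M2 pm2]; apply/has_pmP; exists (M1 :|: M2).
have at_union w : [set e in M1 :|: M2 | w \in e] =
                  [set e in M1 | w \in e] :|: [set e in M2 | w \in e].
  by apply/setP => e; rewrite !inE andb_orl.
case/is_pmP: (pm1) => edges1 cover1; case/is_pmP: (pm2) => edges2 cover2.
apply/is_pmP; split.
  move=> e /setUP [/edges1 | /edges2] [x [y [xW yW nxy Exy ->]]];
  by exists x, y; rewrite !inE xW yW ?orbT.
move=> w; rewrite at_union => /setUP [wW | wW].
  by rewrite (pm_edges_at_out pm2 (negbT (disjointFr disW wW))) setU0 cover1.
by rewrite (pm_edges_at_out pm1 (negbT (disjointFl disW wW))) set0U cover2.
Qed.

Lemma has_pm_bipartite TA TB XA XB :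
  [disjoint TA & TB] -> {in TA & TB, forall x y, E x y} ->
  XA \subset TA -> XB \subset TB -> #|XA| = #|XB| -> has_pm E (XA :|: XB).
Proof.
move=> disT ET + + cardAB; have [n cardA] : {n | #|XA| = n} by exists #|XA|.
have cardB : #|XB| = n by rewrite -cardAB.
elim: n XA XB cardA cardB {cardAB} => [|n IHn] XA XB cardA cardB sA sB.
  by rewrite (cards0_eq cardA) (cards0_eq cardB) setU0 has_pm0.
have /set0Pn [x xA] : XA != set0 by rewrite -card_gt0 cardA.
have /set0Pn [y yB] : XB != set0 by rewrite -card_gt0 cardB.
have xT := subsetP sA x xA; have yT := subsetP sB y yB.
rewrite -(setD1K xA) -(setD1K yB) setUACA; apply: has_pmU.
- have xB : x \in XB = false.
    by apply/negbTE/negP => /(subsetP sB); rewrite (disjointFr disT xT).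
  have yA : y \in XA = false.
    by apply/negbTE/negP => /(subsetP sA); rewrite (disjointFl disT yT).
  by rewrite disjoints_subset subUset !sub1set !inE xB yA !andbF !eqxx.
- apply: has_pm_pair (ET x y xT yT).
  by apply: contraTneq xT => ->; rewrite (disjointFl disT yT).
- apply: IHn; first by move: cardA; rewrite (cardsD1 x) xA => -[].
  + by move: cardB; rewrite (cardsD1 y) yB => -[].
  + exact: subset_trans (subD1set _ _) sA.
  + exact: subset_trans (subD1set _ _) sB.
Qed.

Definition edges_within M A : {set {set V}} := [set e in M | e \subset A].

Definition exposed M W : {set V} := [set x in W | [forall e in M, x \notin e]].

Lemma exposed_sub M W : exposed M W \subset W.
Proof. by apply/subsetP => x; rewrite inE => /andP []. Qed.

Lemma is_pm_within W M A : is_pm W M ->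
  is_pm ((W :&: A) :\: exposed (edges_within M A) (W :&: A)) (edges_within M A).
Proof.
move=> pm; case/is_pmP: (pm) => edges cover; apply/is_pmP; split.
  move=> e; rewrite inE => /andP [eM eA].
  have covered z : z \in e -> z \in (W :&: A) :\: exposed (edges_within M A) (W :&: A).
    move=> ze; rewrite !inE (subsetP (pm_edge_sub pm eM) z ze) (subsetP eA z ze) /=.
    by rewrite andbT; apply/forallPn; exists e; rewrite inE eM eA negbK ze.
  have [x [y [_ _ nxy Exy e_xy]]] := edges e eM.
  by exists x, y; rewrite !covered // e_xy !inE eqxx ?orbT.
move=> w /setDP [/setIP [wW wA]].
rewrite !inE wW wA => /forallPn [e]; rewrite negb_imply negbK => /andP [eMA we].
apply/eqP; rewrite eqn_leq -{1}(cover w wW) card_gt0; apply/andP; split.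
  by apply/subset_leq_card/subsetP => f; rewrite !inE => /andP [/andP [-> _] ->].
by apply/set0Pn; exists e; rewrite inE eMA.
Qed.

Lemma exposed_within_partner W M A x : is_pm W M ->
  x \in exposed (edges_within M A) (W :&: A) ->
  exists y, [/\ y \notin A, E x y || E y x & [set x; y] \in M].
Proof.
move=> pm; rewrite !inE => /andP [/andP [xW xA] /forallP unmatched].
have [y Exy xyM] := pm_partner pm xW; exists y; split=> //.
apply/negP => yA; move: (unmatched [set x; y]).
by rewrite inE xyM subUset !sub1set xA yA !inE eqxx.
Qed.

End PerfectMatching.

Lemma has_pm_subrel (V : finType) (E E' : rel V) (W : {set V}) :
  has_pm E W -> {in W &, forall x y, E x y -> E' x y} -> has_pm E' W.
Proof.
move=> /has_pmP [M /is_pmP [edges cover]] sub; apply/has_pmP; exists M.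
apply/is_pmP; split=> // e /edges [x [y [xW yW nxy Exy ->]]].
by exists x, y; split=> //; apply: sub.
Qed.

Definition closed_nbhd (V : finType) (A : {set V}) (E : rel V) (S : {set V}) : {set V} :=
  [set x in A | (x \in S) || [exists y in S, E x y]].

Definition kfeasible (V : finType) (A TA : {set V}) (E : rel V) (k : nat)
    (S : {set V}) : bool :=
  [&& S \subset A, (A :\: TA) \subset closed_nbhd A E S &
      [exists X : {set V}, [&& X \subset S :&: TA, #|X| == k & has_pm E (S :\: X)]]].

Lemma closed_nbhdP (V : finType) (A : {set V}) (E : rel V) (S : {set V}) x :
  reflect (x \in A /\ (x \in S \/ exists2 y, y \in S & E x y))
          (x \in closed_nbhd A E S).
Proof.
rewrite inE; apply: (iffP andP) => [[xA /orP [xS | /existsP [y /andP [yS Exy]]]] |].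
- by split; [|left].
- by split; [|right; exists y].
case=> xA [xS | [y yS Exy]]; split; rewrite ?xS //.
by apply/orP; right; apply/existsP; exists y; rewrite yS.
Qed.

Lemma closed_nbhd_sub (V : finType) (A A' S S' : {set V}) (E E' : rel V) :
  A \subset A' -> S \subset S' -> (forall x y, E x y -> E' x y) ->
  closed_nbhd A E S \subset closed_nbhd A' E' S'.
Proof.
move=> sA sS sE; apply/subsetP => x /closed_nbhdP [xA xN]; apply/closed_nbhdP.
split; first exact: (subsetP sA).
case: xN => [xS | [y yS Exy]]; first by left; apply: (subsetP sS).
by right; exists y; [apply: (subsetP sS) | apply: sE].
Qed.

Lemma kfeasible_le_card (V : finType) (A TA : {set V}) (E : rel V) k S :
  kfeasible A TA E k S -> k <= #|TA|.
Proof.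
case/and3P => _ _ /existsP [X /and3P [sX /eqP <- _]].
exact/subset_leq_card/(subset_trans sX)/subsetIr.
Qed.

Definition twin_edge (V : finType) (TA TB : {set V}) : rel V :=
  fun x y => ((x \in TA) && (y \in TB)) || ((y \in TA) && (x \in TB)).

Lemma twin_edgeC (V : finType) (TA TB : {set V}) x y :
  twin_edge TA TB x y = twin_edge TB TA x y.
Proof. by rewrite /twin_edge orbC andbC [(y \in TB) && _]andbC. Qed.

Record twin_join (V : finType) (A B TA TB : {set V}) (EA EB E : rel V) : Prop := TwinJoin {
  twin_disjoint : [disjoint A & B];
  twin_subA : TA \subset A;
  twin_subB : TB \subset B;
  twin_edgesA : forall x y, EA x y -> (x \in A) && (y \in A);
  twin_edgesB : forall x y, EB x y -> (x \in B) && (y \in B);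
  twin_joinE : forall x y, E x y = [|| EA x y, EB x y | twin_edge TA TB x y] }.

Lemma twin_join_sym (V : finType) (A B TA TB : {set V}) (EA EB E : rel V) :
  twin_join A B TA TB EA EB E -> twin_join B A TB TA EB EA E.
Proof.
case=> disAB sA sB eA eB eE; split=> // [|x y]; first by rewrite disjoint_sym.
by rewrite eE orbCA twin_edgeC.
Qed.

Section TwinJoin.
Variables (V : finType) (A B TA TB : {set V}) (EA EB E : rel V).
Hypothesis tj : twin_join A B TA TB EA EB E.
Implicit Types SA SB XA XB : {set V}.

Let disAB := twin_disjoint tj.
Let TA_A := twin_subA tj.
Let TB_B := twin_subB tj.
Let EA_A := twin_edgesA tj.
Let EB_B := twin_edgesB tj.
Let E_def := twin_joinE tj.

Lemma twin_edge_from_A x y : x \in A -> E x y -> EA x y \/ (x \in TA /\ y \notin A).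
Proof.
move=> xA; rewrite E_def.
case/or3P=> [-> | /EB_B /andP [xB _] | /orP [/andP [xTA yTB] | /andP [_ xTB]]].
- by left.
- by rewrite (disjointFl disAB xB) in xA.
- by right; rewrite xTA (disjointFl disAB (subsetP TB_B y yTB)).
- by rewrite (disjointFl disAB (subsetP TB_B x xTB)) in xA.
Qed.

Lemma twin_edge_to_A x y : y \in A -> E x y -> EA x y \/ (y \in TA /\ x \notin A).
Proof.
move=> yA; rewrite E_def.
case/or3P=> [-> | /EB_B /andP [_ yB] | /orP [/andP [_ yTB] | /andP [yTA xTB]]].
- by left.
- by rewrite (disjointFl disAB yB) in yA.
- by rewrite (disjointFl disAB (subsetP TB_B y yTB)) in yA.
- by right; rewrite yTA (disjointFl disAB (subsetP TB_B x xTB)).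
Qed.

Lemma twin_edge_within_A x y : x \in A -> y \in A -> E x y -> EA x y.
Proof. by move=> xA yA /(twin_edge_from_A xA) [// | [_]]; rewrite yA. Qed.

Lemma twin_edge_out_A x y : x \in A -> y \notin A -> E x y || E y x -> x \in TA.
Proof.
move=> xA yA /orP [/(twin_edge_from_A xA) | /(twin_edge_to_A xA)] [|[] //].
  by move/EA_A => /andP [_ yA']; rewrite yA' in yA.
by move/EA_A => /andP [yA' _]; rewrite yA' in yA.
Qed.

Lemma EA_sub_E x y : EA x y -> E x y.
Proof. by rewrite E_def => ->. Qed.

Lemma EB_sub_E x y : EB x y -> E x y.
Proof. by rewrite E_def => ->; rewrite orbT. Qed.

Lemma closed_nbhd_twin_join SA SB :
  A :\: TA \subset closed_nbhd A EA SA -> B :\: TB \subset closed_nbhd B EB SB ->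
  (A :|: B) :\: (TA :|: TB) \subset closed_nbhd (A :|: B) E (SA :|: SB).
Proof.
move=> domA domB.
have split_dom : (A :|: B) :\: (TA :|: TB) \subset (A :\: TA) :|: (B :\: TB).
  by rewrite setDUl; apply: setUSS; apply: setDS; [apply: subsetUl | apply: subsetUr].
apply: subset_trans split_dom _; rewrite subUset; apply/andP; split.
  exact: subset_trans domA (closed_nbhd_sub (subsetUl _ _) (subsetUl _ _) EA_sub_E).
exact: subset_trans domB (closed_nbhd_sub (subsetUr _ _) (subsetUr _ _) EB_sub_E).
Qed.

(* The twin vertices [XA] and [XB] left unmatched on either side are matched
   to each other across the complete bipartite join. *)
Lemma has_pm_twin_join SA SB XA XB :
  SA \subset A -> SB \subset B -> XA \subset SA :&: TA -> XB \subset SB :&: TB ->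
  #|XA| = #|XB| -> has_pm EA (SA :\: XA) -> has_pm EB (SB :\: XB) ->
  has_pm E (SA :|: SB).
Proof.
move=> SA_A SB_B; rewrite !subsetI => /andP [XA_SA XA_TA] /andP [XB_SB XB_TB].
move=> cardX pmA pmB.
have -> : SA :|: SB = (XA :|: XB) :|: ((SA :\: XA) :|: (SB :\: XB)).
  by rewrite setUACA -{1}(setIidPr XA_SA) -{1}(setIidPr XB_SB) !setID.
have notSB z : z \in A -> z \in SB = false.
  by move=> zA; apply/negbTE; apply: contraL zA => /(subsetP SB_B) /(disjointFl disAB) ->.
have notSA z : z \in B -> z \in SA = false.
  by move=> zB; apply/negbTE; apply: contraL zB => /(subsetP SA_A) /(disjointFr disAB) ->.
apply: has_pmU.
- rewrite -setI_eq0; apply/eqP/setP => z; rewrite !inE.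
  case: (boolP (z \in XA)) => [/(subsetP XA_SA) /(subsetP SA_A) zA | _] /=.
    by rewrite notSB ?andbF.
  by case: (boolP (z \in XB)) => //= /(subsetP XB_SB) /(subsetP SB_B) zB; rewrite notSA.
- apply: (has_pm_bipartite (disjointW TA_A TB_B disAB)) XA_TA XB_TB cardX.
  by move=> x y xT yT; rewrite E_def /twin_edge xT yT !orbT.
- apply: has_pmU.
  + by apply: disjointW disAB; apply: subset_trans (subsetDl _ _) _.
  + by apply: (has_pm_subrel pmA) => x y _ _ /EA_sub_E.
  + by apply: (has_pm_subrel pmB) => x y _ _ /EB_sub_E.
Qed.

Lemma kfeasible_twin_join i SA SB :
  kfeasible A TA EA i SA -> kfeasible B TB EB i SB ->
  kfeasible (A :|: B) (TA :|: TB) E 0 (SA :|: SB).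
Proof.
case/and3P=> SA_A domA /existsP [XA /and3P [XA_sub /eqP cardXA pmA]].
case/and3P=> SB_B domB /existsP [XB /and3P [XB_sub /eqP cardXB pmB]].
apply/and3P; split; first exact: setUSS.
  exact: closed_nbhd_twin_join.
apply/existsP; exists set0; rewrite sub0set cards0 setD0 /=.
by apply: has_pm_twin_join XA_sub XB_sub _ pmA pmB; rewrite // cardXA cardXB.
Qed.

Variables (S : {set V}) (M : {set {set V}}).
Hypotheses (S_AB : S \subset A :|: B) (pmS : is_pm E S M).

(* The vertices of [S :&: A] that [M] matches across the join: they form the
   set X of the feasibility of [S :&: A] for [A]. *)
Let XA := exposed (edges_within M A) (S :&: A).
Let XB := exposed (edges_within M B) (S :&: B).

Lemma exposed_twin_sub : XA \subset TA.
Proof.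
apply/subsetP => x xX; have /setIP [_ xA] := subsetP (exposed_sub _ _) x xX.
by have [y [yA Exy _]] := exposed_within_partner pmS xX; apply: twin_edge_out_A Exy.
Qed.

Lemma exposed_twin_matched x y : x \in XA -> y \notin A -> [set x; y] \in M -> y \in XB.
Proof.
move=> xX yA xyM; have /setIP [_ xA] := subsetP (exposed_sub _ _) x xX.
have yxy : y \in [set x; y] by rewrite !inE eqxx orbT.
have yS : y \in S := subsetP (pm_edge_sub pmS xyM) y yxy.
have yB : y \in B by move: (subsetP S_AB y yS); rewrite inE (negbTE yA).
rewrite !inE yS yB /=; apply/forallP => e; apply/implyP; rewrite inE => /andP [eM eB].
apply/negP => ye; have e_xy := pm_edge_uniq pmS yS eM xyM ye yxy.
by move: (subsetP eB x); rewrite e_xy !inE eqxx (disjointFr disAB xA) => /(_ isT).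
Qed.

Lemma card_exposed_twin_leq : #|XA| <= #|XB|.
Proof.
pose partner x := odflt x [pick y | (y \notin A) && ([set x; y] \in M)].
have partnerP x : x \in XA -> (partner x \notin A) && ([set x; partner x] \in M).
  move=> xX; rewrite /partner; case: pickP => [y //|none].
  by have [y [yA _ xyM]] := exposed_within_partner pmS xX; move: (none y); rewrite yA xyM.
rewrite -(card_in_imset (f := partner)).
  apply/subset_leq_card/subsetP => _ /imsetP [x xX ->].
  by have /andP [yA xyM] := partnerP x xX; apply: exposed_twin_matched xX yA xyM.
move=> x1 x2 x1X x2X same.
have /andP [yA xyM1] := partnerP x1 x1X; have /andP [_ xyM2] := partnerP x2 x2X.
rewrite -same in xyM2; set y := partner x1 in yA xyM1 xyM2.
have yxy x : y \in [set x; y] by rewrite !inE eqxx orbT.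
have yS : y \in S := subsetP (pm_edge_sub pmS xyM1) y (yxy x1).
have e12 := pm_edge_uniq pmS yS xyM1 xyM2 (yxy x1) (yxy x2).
have : x1 \in [set x2; y] by rewrite -e12 !inE eqxx.
rewrite !inE => /orP [/eqP // | /eqP x1y].
by have /setIP [_] := subsetP (exposed_sub _ _) x1 x1X; rewrite x1y (negbTE yA).
Qed.

Lemma kfeasible_twin_restrict :
  (A :|: B) :\: (TA :|: TB) \subset closed_nbhd (A :|: B) E S ->
  kfeasible A TA EA #|XA| (S :&: A).
Proof.
move=> dom; apply/and3P; split.
- exact: subsetIr.
- apply/subsetP => x /setDP [xA xTA].
  have xTB : x \notin TB by apply: contraL xA => /(subsetP TB_B) /(disjointFl disAB) ->.
  have /closed_nbhdP [_ [xS | [y yS Exy]]] : x \in closed_nbhd (A :|: B) E S.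
    by apply: (subsetP dom); rewrite !inE negb_or xTA xTB xA.
  + by apply/closed_nbhdP; split=> //; left; apply/setIP.
  + have [EAxy | [xT _]] := twin_edge_from_A xA Exy; last by rewrite xT in xTA.
    apply/closed_nbhdP; split=> //; right; exists y => //.
    by have /andP [_ yA] := EA_A EAxy; apply/setIP.
- apply/existsP; exists XA; rewrite subsetI exposed_sub exposed_twin_sub eqxx /=.
  have pmA : has_pm E ((S :&: A) :\: XA).
    by apply/has_pmP; exists (edges_within M A); apply: is_pm_within.
  apply: (has_pm_subrel pmA) => x y /setDP [/setIP [_ xA] _] /setDP [/setIP [_ yA] _].
  exact: twin_edge_within_A.
Qed.

End TwinJoin.

Lemma kfeasible_twin_split (V : finType) (A B TA TB : {set V}) (EA EB E : rel V) S :
  twin_join A B TA TB EA EB E -> kfeasible (A :|: B) (TA :|: TB) E 0 S ->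
  exists i, kfeasible A TA EA i (S :&: A) /\ kfeasible B TB EB i (S :&: B).
Proof.
move=> tj /and3P [S_AB dom /existsP [X /and3P [_ /eqP /cards0_eq ->]]].
rewrite setD0 => /has_pmP [M pmS].
have tj' := twin_join_sym tj.
have S_BA : S \subset B :|: A by rewrite setUC.
have dom' : (B :|: A) :\: (TB :|: TA) \subset closed_nbhd (B :|: A) E S.
  by rewrite setUC [TB :|: _]setUC.
set XA := exposed (edges_within M A) (S :&: A).
set XB := exposed (edges_within M B) (S :&: B).
exists #|XA|; split; first exact: (kfeasible_twin_restrict tj pmS dom).
have -> : #|XA| = #|XB|.
  apply/anti_leq.
  by rewrite (card_exposed_twin_leq tj S_AB pmS) (card_exposed_twin_leq tj' S_BA pmS).
exact: (kfeasible_twin_restrict tj' pmS dom').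
Qed.

Section DecompositionTree.
Variable V : finType.
Implicit Types (t u l r : dtree V) (S : {set V}).

Lemma hV_node o l r : hV (Node o l r) = hV l :|: hV r.
Proof. by apply/setP => x; rewrite !inE mem_cat. Qed.

Lemma hTS_sub_hV t : hTS t \subset hV t.
Proof.
elim: t => [x | o l IHl r IHr]; first by rewrite sub1set inE mem_seq1.
rewrite hV_node; case: o => /=; try exact: setUSS.
exact: subset_trans IHl (subsetUl _ _).
Qed.

Lemma hE_sub_hV t x y : hE t x y -> (x \in hV t) && (y \in hV t).
Proof.
elim: t x y => [// | o l IHl r IHr] x y /=; rewrite hV_node !in_setU.
case/or3P => [/IHl /andP [-> ->] // | /IHr /andP [-> ->] | ]; first by rewrite !orbT.
case/andP => _ /orP [] /andP [/(subsetP (hTS_sub_hV l)) -> /(subsetP (hTS_sub_hV r)) ->];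
by rewrite orbT.
Qed.

Lemma uniq_leaves_subtree s t : is_subtree s t -> uniq (leaves t) -> uniq (leaves s).
Proof.
elim: t => [x | o l IHl r IHr] /=; first by case=> [-> | []].
case=> [-> // | [sl | sr]]; rewrite cat_uniq => /and3P [ul _ ur]; auto.
Qed.

Lemma disjoint_hV_children o l r :
  uniq (leaves (Node o l r)) -> [disjoint hV l & hV r].
Proof.
rewrite /= cat_uniq => /and3P [_ /hasPn lr _].
rewrite disjoints_subset; apply/subsetP => x; rewrite !inE => xl.
by apply: contraL xl => /lr.
Qed.

Lemma twin_join_true_twin l r : [disjoint hV l & hV r] ->
  twin_join (hV l) (hV r) (hTS l) (hTS r) (hE l) (hE r) (hE (Node OTrue l r)).
Proof. by split=> //; first [exact: hTS_sub_hV | exact: hE_sub_hV]. Qed.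

Lemma feasibleE (u : dtree V) k S : feasible u k S = kfeasible (hV u) (hTS u) (hE u) k S.
Proof. by []. Qed.

Lemma gamma_leq u k S : feasible u k S -> oleq (gamma u k) (Some #|S|).
Proof.
move=> fS; rewrite /gamma; have -> : [exists S, feasible u k S] by apply/existsP; exists S.
exact: bigmin_leq.
Qed.

Lemma gamma_witness u k m : gamma u k = Some m -> exists2 S, feasible u k S & #|S| = m.
Proof.
rewrite /gamma; case: existsP => // -[S0 fS0] [<-].
have [S fS ->] := bigmin_attained (F := fun S : {set V} => #|S|) fS0 (max_card _).
by exists S.
Qed.

Definition min_gamma_sum l r : option nat :=
  foldr omin None
    [seq oadd (gamma l i) (gamma r i) | i <- iota 0 (minn #|hTS l| #|hTS r|).+1].

Lemma gamma0_true_twin_leq l r : [disjoint hV l & hV r] ->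
  oleq (gamma (Node OTrue l r) 0) (min_gamma_sum l r).
Proof.
move=> dis; rewrite /min_gamma_sum; case min_eq: foldr => [m|] //.
have /mapP [i _] := foldr_omin_mem min_eq.
case gl: (gamma l i) => [a|] //; case gr: (gamma r i) => [b|] // [->].
have [SA fA <-] := gamma_witness gl; have [SB fB <-] := gamma_witness gr.
have fS : feasible (Node OTrue l r) 0 (SA :|: SB).
  rewrite feasibleE hV_node.
  exact: (kfeasible_twin_join (twin_join_true_twin dis) fA fB).
apply: oleq_trans (gamma_leq fS) _; exact: leq_card_setU.
Qed.

Lemma min_gamma_sum_leq l r : [disjoint hV l & hV r] ->
  oleq (min_gamma_sum l r) (gamma (Node OTrue l r) 0).
Proof.
move=> dis; case g0: (gamma _ 0) => [m|]; last by case: min_gamma_sum.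
have [S fS <-] := gamma_witness g0; rewrite feasibleE hV_node in fS.
have [i [fA fB]] := kfeasible_twin_split (twin_join_true_twin dis) fS.
have i_range : i \in iota 0 (minn #|hTS l| #|hTS r|).+1.
  by rewrite mem_iota ltnS leq_min (kfeasible_le_card fA) (kfeasible_le_card fB).
apply: oleq_trans (foldr_omin_leq (map_f _ i_range)) _.
apply: oleq_trans (oleq_oadd (gamma_leq (u := l) fA) (gamma_leq (u := r) fB)) _ => /=.
rewrite -(cardsID (hV l) S) leq_add2l; apply/subset_leq_card/subsetP => x.
by case/setIP => xS xr; rewrite in_setD xS (disjointFl dis xr).
Qed.

End DecompositionTree.

Theorem lemma11 (V : finType) (G : rel V) (T vl vr : dtree V) :
  symmetric G -> irreflexive G -> distance_hereditary G ->
  decomp_tree G T ->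
  is_subtree (Node OTrue vl vr) T ->
  propP vl -> propP vr ->
  gamma (Node OTrue vl vr) 0 =
  foldr omin None
    [seq oadd (gamma vl i) (gamma vr i) | i <- iota 0 (minn #|hTS vl| #|hTS vr|).+1].
Proof.
move=> _ _ _ [uniqT _] subT _ _.
have dis := disjoint_hV_children (uniq_leaves_subtree subT uniqT).
by apply: oleq_anti; [apply: gamma0_true_twin_leq | apply: min_gamma_sum_leq].
Qed.
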